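(* Let $r,s,t$ be nonzero reals and let $\lambda=(\lambda_k)_{k\ge 0}$ be a strictly increasing sequence of positive reals with $\lambda_k\to\infty$. For $x\in\omega$ put $\widehat W_n(x)=\frac{1}{\lambda_n}\sum_{k=0}^n(\lambda_k-\lambda_{k-1})(rx_k+sx_{k-1}+tx_{k-2})$ and, for $\mu\in\{c_0,c,\ell_\infty,\ell_p\}$, $\mu^\lambda(\widehat B)=\{x\in\omega:(\widehat W_n(x))_n\in\mu\}$, normed by $\|x\|=\sup_n|\widehat W_n(x)|$ for $\mu\in\{c_0,c,\ell_\infty\}$ and by $\|x\|=(\sum_n|\widehat W_n(x)|^p)^{1/p}$ for $\mu=\ell_p$, $1\le p<\infty$. Then $c_0^\lambda(\widehat B)$, $c^\lambda(\widehat B)$, $\ell_\infty^\lambda(\widehat B)$ and $\ell_p^\lambda(\widehat B)$ are norm isomorphic to $c_0$, $c$, $\ell_\infty$ and $\ell_p$ respectively, i.e. in each case there is a linear bijection onto the classical space preserving norms.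
   Context: $\omega$ is the space of all complex sequences indexed by $\mathbb{N}=\{0,1,2,\dots\}$; $\ell_\infty,c,c_0,\ell_p$ are the spaces of bounded, convergent, null and absolutely $p$-summable sequences with their usual norms ($\sup$-norm on the first three). Convention: terms with negative subscript are $0$ ($x_{-1}=x_{-2}=0$, $\lambda_{-1}=0$). *)

From Stdlib Require Import Reals.
From Coquelicot Require Import Coquelicot.
Open Scope R_scope.

Definition seqC := nat -> C.

(* x_{k-1}, with x_{-1} = 0 *)
Definition shift1 (x : seqC) : seqC :=
  fun k => match k with O => RtoC 0 | S k' => x k' end.

(* lambda_{k-1}, with lambda_{-1} = 0 *)
Definition lprev (lam : nat -> R) (k : nat) : R :=
  match k with O => 0 | S k' => lam k' end.

Definition What (r s t : R) (lam : nat -> R) (x : seqC) : seqC :=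
  fun n => Cmult (RtoC (/ lam n))
    (sum_n (fun k => Cmult (RtoC (lam k - lprev lam k))
       (Cplus (Cplus (Cmult (RtoC r) (x k)) (Cmult (RtoC s) (shift1 x k)))
              (Cmult (RtoC t) (shift1 (shift1 x) k)))) n).

Definition is_c0 (y : seqC) : Prop := filterlim y eventually (locally (RtoC 0)).
Definition is_c (y : seqC) : Prop := exists l : C, filterlim y eventually (locally l).
Definition is_linf (y : seqC) : Prop := exists M : R, forall n, Cmod (y n) <= M.

(* a^p for a >= 0, p > 0, with 0^p = 0 (Stdlib's Rpower 0 p is 1) *)
Definition pw (a p : R) : R := if Req_EM_T a 0 then 0 else Rpower a p.

Definition is_lp (p : R) (y : seqC) : Prop := ex_series (fun n => pw (Cmod (y n)) p).

Definition supnorm (y : seqC) : R := real (Lub_Rbar (fun a => exists n, a = Cmod (y n))).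
Definition lpnorm (p : R) (y : seqC) : R := pw (Series (fun n => pw (Cmod (y n)) p)) (/ p).

Definition lamB (mu : seqC -> Prop) (r s t : R) (lam : nat -> R) : seqC -> Prop :=
  fun x => mu (What r s t lam x).
Definition lamB_supnorm (r s t : R) (lam : nat -> R) (x : seqC) : R :=
  supnorm (What r s t lam x).
Definition lamB_lpnorm (p r s t : R) (lam : nat -> R) (x : seqC) : R :=
  lpnorm p (What r s t lam x).

Definition norm_iso (X Y : seqC -> Prop) (nX nY : seqC -> R) : Prop :=
  exists T : seqC -> seqC,
    (forall (a : C) (x y : seqC), X x -> X y ->
       T (fun n => Cplus (Cmult a (x n)) (y n)) =
       (fun n => Cplus (Cmult a (T x n)) (T y n))) /\
    (forall x, X x -> Y (T x)) /\
    (forall x y, X x -> X y -> T x = T y -> x = y) /\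
    (forall y, Y y -> exists x, X x /\ T x = y) /\
    (forall x, X x -> nY (T x) = nX x).

(* The transform What factors as x |-> wmean lam (band r s t x), where band is
   the lower triangular band operator with diagonal r and wmean the weighted
   mean with weights lam_k - lam_{k-1}.  Both are linear bijections of omega:
   band is inverted by forward substitution since r <> 0, and wmean by the
   telescoping formula y_k = (lam_k z_k - lam_{k-1} z_{k-1}) / (lam_k - lam_{k-1}).
   Hence What is a linear bijection of omega, and each mu^lambda(B) is by
   definition the preimage of mu under What, normed by the norm of mu pulled
   back along What. *)
From Stdlib Require Import Reals Lra FunctionalExtensionality.
From Coquelicot Require Import Coquelicot.
Open Scope R_scope.

Definition seq_zero : seqC := fun _ => RtoC 0.

Definition seq_linear (T : seqC -> seqC) : Prop :=
  forall (a : C) (x y : seqC),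
    T (fun n => Cplus (Cmult a (x n)) (y n)) =
    (fun n => Cplus (Cmult a (T x n)) (T y n)).

Lemma RtoC_neq0 (a : R) : a <> 0 -> RtoC a <> RtoC 0.
Proof. intros Ha E; apply Ha; injection E; auto. Qed.

Lemma Cmult_RtoC_eq0 (a : R) (z : C) :
  a <> 0 -> Cmult (RtoC a) z = RtoC 0 -> z = RtoC 0.
Proof.
  intros Ha E.
  replace z with (Cmult (Cinv (RtoC a)) (Cmult (RtoC a) z))
    by (field; apply RtoC_neq0; exact Ha).
  rewrite E; ring.
Qed.

Lemma linear_injective (T : seqC -> seqC) :
  seq_linear T -> (forall x, T x = seq_zero -> x = seq_zero) ->
  forall x y, T x = T y -> x = y.
Proof.
  intros Tlin Tker x y Exy.
  assert (Hdiff : T (fun n => Cplus (Cmult (RtoC (-1)) (x n)) (y n)) = seq_zero).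
  { rewrite Tlin, Exy; apply functional_extensionality; intro n.
    unfold seq_zero; ring. }
  apply functional_extensionality; intro n.
  pose proof (f_equal (fun z => z n) (Tker _ Hdiff)) as Hn.
  unfold seq_zero in Hn.
  replace (x n) with (Cplus (y n) (Cmult (RtoC (-1))
                       (Cplus (Cmult (RtoC (-1)) (x n)) (y n)))) by ring.
  rewrite Hn; ring.
Qed.

Lemma norm_iso_preimage (T : seqC -> seqC) (Y : seqC -> Prop) (nY : seqC -> R) :
  seq_linear T ->
  (forall x y, T x = T y -> x = y) ->
  (forall y, exists x, T x = y) ->
  norm_iso (fun x => Y (T x)) Y (fun x => nY (T x)) nY.
Proof.
  intros Tlin Tinj Tsurj.
  exists T; repeat split.
  - intros a x y _ _; apply Tlin.
  - intros x Hx; exact Hx.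
  - intros x y _ _; apply Tinj.
  - intros y Hy; destruct (Tsurj y) as [x <-]; exists x; auto.
Qed.

Lemma sum_n_Sn_C (u : nat -> C) (n : nat) :
  (sum_n u (S n) : C) = Cplus (sum_n u n) (u (S n)).
Proof. exact (sum_Sn u n). Qed.

Lemma sum_n_linear (f g h : nat -> C) (a : C) :
  (forall k, f k = Cplus (Cmult a (g k)) (h k)) ->
  forall n, (sum_n f n : C) = Cplus (Cmult a (sum_n g n)) (sum_n h n).
Proof.
  intros Hf n; induction n as [|n IH].
  - rewrite !sum_O; apply Hf.
  - rewrite !sum_n_Sn_C, IH, Hf; ring.
Qed.

Lemma sum_n_eq0 (u : nat -> C) :
  (forall n, (sum_n u n : C) = RtoC 0) -> forall n, u n = RtoC 0.
Proof.
  intros Hu [|n].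
  - rewrite <- (Hu 0%nat), sum_O; reflexivity.
  - pose proof (Hu (S n)) as HSn.
    rewrite sum_n_Sn_C, (Hu n) in HSn.
    rewrite <- HSn; ring.
Qed.

Lemma shift1_vanish (x : seqC) (n : nat) :
  (forall k, (k < n)%nat -> x k = RtoC 0) -> shift1 x n = RtoC 0.
Proof. destruct n as [|n]; simpl; auto. Qed.

Section BandOperator.
Variables r s t : R.
Hypothesis hr : r <> 0.

Definition band (x : seqC) : seqC := fun k =>
  Cplus (Cplus (Cmult (RtoC r) (x k)) (Cmult (RtoC s) (shift1 x k)))
        (Cmult (RtoC t) (shift1 (shift1 x) k)).

Lemma band_linear : seq_linear band.
Proof.
  intros a x y; apply functional_extensionality; intros [|[|k]]; unfold band; simpl; ring.
Qed.

Lemma band_kernel (x : seqC) : band x = seq_zero -> x = seq_zero.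
Proof.
  intro Hx; apply functional_extensionality; intro n.
  induction n as [n IH] using Wf_nat.lt_wf_ind.
  apply (f_equal (fun z => z n)) in Hx; unfold band, seq_zero in Hx.
  rewrite (shift1_vanish x n IH),
          (shift1_vanish (shift1 x) n (fun k Hk => shift1_vanish x k
             (fun j Hj => IH j (Nat.lt_trans _ _ _ Hj Hk)))) in Hx.
  apply (Cmult_RtoC_eq0 r); [exact hr|].
  rewrite <- Hx; ring.
Qed.

(* Forward substitution: [band_sol y n] is the pair (x_n, x_{n-1}). *)
Fixpoint band_sol (y : seqC) (n : nat) : C * C :=
  match n with
  | O => (Cdiv (y O) (RtoC r), RtoC 0)
  | S m =>
      (Cdiv (Cminus (Cminus (y (S m)) (Cmult (RtoC s) (fst (band_sol y m))))
                    (Cmult (RtoC t) (snd (band_sol y m)))) (RtoC r),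
       fst (band_sol y m))
  end.

Definition band_inv (y : seqC) : seqC := fun n => fst (band_sol y n).

Lemma shift1_band_inv (y : seqC) (n : nat) :
  shift1 (band_inv y) n = snd (band_sol y n).
Proof. destruct n; reflexivity. Qed.

Lemma band_band_inv (y : seqC) : band (band_inv y) = y.
Proof.
  apply functional_extensionality; intros [|m]; unfold band.
  - unfold band_inv; simpl; field; apply RtoC_neq0; exact hr.
  - change (shift1 (shift1 (band_inv y)) (S m)) with (shift1 (band_inv y) m).
    rewrite !shift1_band_inv; unfold band_inv; simpl.
    field; apply RtoC_neq0; exact hr.
Qed.

End BandOperator.

Section WeightedMean.
Variable lam : nat -> R.
Hypothesis hpos : forall k, 0 < lam k.
Hypothesis hinc : forall k, lam k < lam (S k).

Definition weight (k : nat) : R := lam k - lprev lam k.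

Lemma weight_neq0 (k : nat) : weight k <> 0.
Proof.
  unfold weight; destruct k; simpl; [specialize (hpos 0%nat) | specialize (hinc k)]; lra.
Qed.

Lemma lam_neq0 (n : nat) : lam n <> 0.
Proof. specialize (hpos n); lra. Qed.

Definition wmean (y : seqC) : seqC := fun n =>
  Cmult (RtoC (/ lam n)) (sum_n (fun k => Cmult (RtoC (weight k)) (y k)) n).

Lemma wmean_linear : seq_linear wmean.
Proof.
  intros a x y; apply functional_extensionality; intro n; unfold wmean.
  rewrite (sum_n_linear _ (fun k => Cmult (RtoC (weight k)) (x k))
                          (fun k => Cmult (RtoC (weight k)) (y k)) a)
    by (intro k; ring).
  ring.
Qed.

Lemma wmean_kernel (y : seqC) : wmean y = seq_zero -> y = seq_zero.
Proof.
  intro Hy; apply functional_extensionality; intro k.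
  apply (Cmult_RtoC_eq0 (weight k)); [apply weight_neq0|].
  revert k; apply sum_n_eq0; intro n.
  apply (f_equal (fun z => z n)) in Hy; unfold wmean, seq_zero in Hy.
  apply (Cmult_RtoC_eq0 (/ lam n)); [apply Rinv_neq_0_compat, lam_neq0 | exact Hy].
Qed.

Definition wmean_inv (z : seqC) : seqC := fun k =>
  Cdiv (Cminus (Cmult (RtoC (lam k)) (z k)) (Cmult (RtoC (lprev lam k)) (shift1 z k)))
       (RtoC (weight k)).

Lemma wmean_inv_telescope (z : seqC) (n : nat) :
  (sum_n (fun k => Cmult (RtoC (weight k)) (wmean_inv z k)) n : C) = Cmult (RtoC (lam n)) (z n).
Proof.
  assert (Hterm : forall k, Cmult (RtoC (weight k)) (wmean_inv z k) =
            Cminus (Cmult (RtoC (lam k)) (z k)) (Cmult (RtoC (lprev lam k)) (shift1 z k))).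
  { intro k; unfold wmean_inv; field; apply RtoC_neq0, weight_neq0. }
  induction n as [|n IH].
  - rewrite sum_O, Hterm; simpl; ring.
  - rewrite sum_n_Sn_C, IH, Hterm; simpl; ring.
Qed.

Lemma wmean_wmean_inv (z : seqC) : wmean (wmean_inv z) = z.
Proof.
  apply functional_extensionality; intro n; unfold wmean.
  rewrite wmean_inv_telescope, RtoC_inv by apply lam_neq0.
  field; apply RtoC_neq0, lam_neq0.
Qed.

End WeightedMean.

Lemma What_factor (r s t : R) (lam : nat -> R) (x : seqC) :
  What r s t lam x = wmean lam (band r s t x).
Proof. reflexivity. Qed.

Lemma What_linear (r s t : R) (lam : nat -> R) : seq_linear (What r s t lam).
Proof. intros a x y; rewrite !What_factor, band_linear; apply wmean_linear. Qed.

Lemma What_norm_iso (r s t : R) (lam : nat -> R) (Y : seqC -> Prop) (nY : seqC -> R) :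
  r <> 0 -> (forall k, 0 < lam k) -> (forall k, lam k < lam (S k)) ->
  norm_iso (lamB Y r s t lam) Y (fun x => nY (What r s t lam x)) nY.
Proof.
  intros hr hpos hinc.
  apply (norm_iso_preimage (What r s t lam)); [apply What_linear | |].
  - apply linear_injective; [apply What_linear|].
    + intros x Hx; apply (band_kernel r s t hr), (wmean_kernel lam hpos hinc), Hx.
  - intro y; exists (band_inv r s t (wmean_inv lam y)).
    rewrite What_factor, band_band_inv by exact hr.
    apply wmean_wmean_inv; assumption.
Qed.

Theorem theorem2 (r s t : R) (lam : nat -> R)
  (hr : r <> 0) (hs : s <> 0) (ht : t <> 0)
  (hpos : forall k, 0 < lam k)
  (hinc : forall k, lam k < lam (S k))
  (hinf : is_lim_seq lam p_infty) :
  norm_iso (lamB is_c0 r s t lam) is_c0 (lamB_supnorm r s t lam) supnorm /\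
  norm_iso (lamB is_c r s t lam) is_c (lamB_supnorm r s t lam) supnorm /\
  norm_iso (lamB is_linf r s t lam) is_linf (lamB_supnorm r s t lam) supnorm /\
  (forall p : R, 1 <= p ->
     norm_iso (lamB (is_lp p) r s t lam) (is_lp p)
              (lamB_lpnorm p r s t lam) (lpnorm p)).
Proof.
  repeat split; try intros p _; apply What_norm_iso; assumption.
Qed.
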